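(* Consider a traffic flow competing with other flows for transmission on a link of constant bit rate $c>0$ under non-preemptive strict priority scheduling (FIFO queues, infinite buffers, initially empty), where the considered flow has the highest priority. Let $l^M$ be the maximum packet length of the highest-priority flow and $l^{M_l}$ the maximum packet length of all lower-priority queues. If the highest-priority flow has token-bucket arrival curve $\alpha(t)=\rho t+\sigma$ with $0\le\rho\le c$, $\sigma\ge0$, then: (i) the output has arrival curve $\rho t+\sigma+\rho\frac{l^M+l^{M_l}}{c}$, i.e. for all $s,t\ge0$, $A^{*}(s,s+t)\le\rho t+\sigma+\frac{\rho}{c}(l^M+l^{M_l})$; (ii) for all $t\ge0$, $B(t)\le\sigma+\frac{\rho}{c}(l^M+l^{M_l})$; (iii) for all $t\ge0$, $D(t)\le\frac{\sigma+l^M+l^{M_l}}{c}$.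
   Context: Non-preemptive strict priority: whenever the link is free and some queue is nonempty, it starts transmitting the head packet of the highest-priority nonempty queue at rate $c$; a transmission is never interrupted. By convention, a packet is said to have arrived (respectively, been served) when and only when its last bit has arrived (respectively, departed). $A(t)$ is the cumulative amount of traffic (sum of packet lengths) of the highest-priority flow arrived in $[0,t)$ and $A^{*}(t)$ the amount served in $[0,t)$; $A(0)=A^{*}(0)=0$, $A(s,t)=A(t)-A(s)$, $A^{*}(s,t)=A^{*}(t)-A^{*}(s)$. The flow has arrival curve $\alpha$ if $A(s,t)\le\alpha(t-s)$ for all $0\le s\le t$. Backlog $B(t)=A(t)-A^{*}(t)$; virtual delay $D(t)=\inf\{\tau\ge0:A(t)\le A^{*}(t+\tau)\}$. *)

From HB Require Import structures.
From mathcomp Require Import all_boot all_order all_algebra.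
From mathcomp Require Import all_classical all_reals.
From mathcomp Require Import ereal.

Set Implicit Arguments.
Unset Strict Implicit.
Unset Printing Implicit Defensive.

Import Order.TTheory GRing.Theory Num.Theory.
Local Open Scope classical_set_scope.
Local Open Scope ring_scope.

(* Each packet p has
   - an arrival time  a p   (instant its last bit arrives),
   - a length         l p,
   - a priority class cls p (0 = highest priority; the considered flow is
     exactly the set of class-0 packets, all other flows have class >= 1),
   - a start-of-transmission time S p : \bar R (S p = +oo: never started). *)

Section Defs.
Variables (R : realType) (T : choiceType).

(* departure time (last bit leaves): transmission at rate c, never interrupted *)
Definition departure (c : R) (l : T -> R) (S : T -> \bar R) (p : T) : \bar R :=
  (S p + (l p / c)%:E)%E.

Definition transmitting (c : R) (l : T -> R) (S : T -> \bar R) (p : T) (t : R) :=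
  (S p <= t%:E)%E /\ (t%:E < departure c l S p)%E.

Definition np_strict_priority (c : R) (a l : T -> R) (cls : T -> nat)
    (S : T -> \bar R) : Prop :=
  [/\
      (forall p, ((a p)%:E <= S p)%E),
      (forall p q t, p <> q -> transmitting c l S p t ->
                     ~ transmitting c l S q t),
      (* work conservation: link never idle while some queue is nonempty *)
      (forall q t, a q <= t -> (t%:E < S q)%E ->
                   exists p, transmitting c l S p t),
      (forall p q s, S p = s%:E -> (cls q < cls p)%N -> a q < s ->
                     ~ (s%:E < S q)%E) &
      (forall p q s, cls p = cls q -> a p < a q -> S q = s%:E ->
                     (S p < s%:E)%E)].

Definition cum_arrival (a l : T -> R) (cls : T -> nat) (t : R) : R :=
  \sum_(p \in [set p | cls p = 0%N /\ a p < t]) l p.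

Definition cum_service (c : R) (l : T -> R) (cls : T -> nat)
    (S : T -> \bar R) (t : R) : R :=
  \sum_(p \in [set p | cls p = 0%N /\ (departure c l S p < t%:E)%E]) l p.

Definition virtual_delay (A Astar : R -> R) (t : R) : \bar R :=
  ereal_inf (@EFin R @` [set tau | 0 <= tau /\ A t <= Astar (t + tau)]).

End Defs.

From HB Require Import structures.
From mathcomp Require Import all_boot all_order all_algebra.
From mathcomp Require Import all_classical all_reals.
From mathcomp Require Import ereal.
From mathcomp Require Import lra finmap.
Set Implicit Arguments.
Unset Strict Implicit.
Unset Printing Implicit Defensive.

Import Order.TTheory GRing.Theory Num.Theory.
Local Open Scope classical_set_scope.
Local Open Scope ring_scope.

(* The top-priority flow is offered the rate-latency service curve
   [c t - (lM + lMl)]^+, and the three bounds are the classical output,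
   backlog and horizontal-deviation bounds of a token-bucket flow served with
   such a curve (using rho <= c).
   For the service curve fix v.  Either every top-priority packet that arrived
   before v has left by v, or let u be the earliest top-priority arrival from
   which the top-priority queue stays nonempty up to v.  On [u, v) the link
   is busy and no lower-priority packet starts, so every packet transmitted
   during [u, v) is either the single lower-priority packet in transmission at
   u, the single top-priority packet in transmission at v, or a top-priority
   packet that arrived in [u, v) and left by v.  Hence
   c (v - u) <= lMl + lM + A*(v) - A(u). *)

Lemma finite_set_argmin {d} (R : orderType d) (T : choiceType) (X : set T)
    (f : T -> R) x0 :
  finite_set X -> X x0 -> exists2 m, X m & forall y, X y -> (f m <= f y)%O.
Proof.
move=> /finite_fsetP[Y ->] Yx0.
have [/= i _ imin] := arg_minP (f \o val) (isT : xpredT (FSetSub Yx0)).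
by exists (val i) => [|y Yy]; [exact: valP | exact: (imin (FSetSub Yy))].
Qed.

Section FiniteSums.
Variables (R : numDomainType) (T : choiceType) (f : T -> R).

Lemma ler_fsum_subset (A B : set T) :
  A `<=` B -> finite_set B -> (forall x, B x -> 0 <= f x) ->
  \sum_(x \in A) f x <= \sum_(x \in B) f x.
Proof.
move=> AB Bfin f0; rewrite (fsbigID A B) //.
have -> : B `&` A = A by apply/setIidr.
by rewrite lerDl; apply: fsumr_ge0 => x [/f0].
Qed.

Lemma fsum_setU_le (A B : set T) :
  finite_set A -> finite_set B -> (forall x, B x -> 0 <= f x) ->
  \sum_(x \in A `|` B) f x <= \sum_(x \in A) f x + \sum_(x \in B) f x.
Proof.
move=> Afin Bfin f0.
have -> : A `|` B = A `|` (B `\` A) by rewrite setUDr setDv setD0.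
rewrite fsbigU0 //; last by move=> x [Ax []].
  by rewrite lerD2l ler_fsum_subset // => x [].
exact: finite_setD.
Qed.

Lemma fsum_subset1_le (X : set T) b :
  is_subset1 X -> 0 <= b -> (forall x, X x -> f x <= b) ->
  \sum_(x \in X) f x <= b.
Proof.
move=> X1 b0 fb; have [->|/set0P[x Xx]] := eqVneq X set0.
  by rewrite fsbig_set0.
have -> : X = [set x] by apply/seteqP; split=> [y /(X1 _ _ Xx) <-|y ->].
by rewrite fsbig_set1; apply: fb.
Qed.

End FiniteSums.

Lemma interval_cover_length_seq (R : realDomainType) (T : eqType)
    (lo len : T -> R) (s : seq T) u v :
  (forall p, 0 <= len p) ->
  (forall x, u <= x < v -> exists2 p, p \in s & lo p <= x < lo p + len p) ->
  v - u <= \sum_(p <- s) len p.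
Proof.
move=> len_ge0; elim: {s}(size s) {-2}s (leqnn (size s)) u => [|n IH] s.
  rewrite leqn0 => /nilP -> u cov; rewrite big_nil subr_le0 leNgt.
  apply/negP => uv; have /cov[p] : u <= u < v by rewrite lexx uv.
  by rewrite in_nil.
move=> sz u cov; have [vu|uv] := leP v u.
  by rewrite (le_trans (_ : _ <= 0)) ?subr_le0 ?sumr_ge0.
have /cov[p ps /andP[pu up]] : u <= u < v by rewrite lexx uv.
rewrite (big_rem p ps) /=.
have : v - (lo p + len p) <= \sum_(q <- rem p s) len q.
  apply: IH => [|x /andP[px xv]].
    by move: sz; rewrite size_rem //; case: (size s).
  have /cov[q qs /andP[qx xq]] : u <= x < v by rewrite xv (le_trans (ltW up)).
  exists q => //; last by rewrite qx xq.
  move: qs; rewrite (perm_mem (perm_to_rem ps)) inE => /predU1P[qp|//].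
  by move: xq; rewrite qp ltNge px.
lra.
Qed.

Lemma interval_cover_length (R : realDomainType) (T : choiceType)
    (lo len : T -> R) (G : set T) u v :
  (forall p, 0 <= len p) -> finite_set G ->
  (forall x, u <= x < v -> exists2 p, G p & lo p <= x < lo p + len p) ->
  v - u <= \sum_(p \in G) len p.
Proof.
move=> len_ge0 Gfin cov; rewrite fsbig_finite //.
apply: (@interval_cover_length_seq _ _ lo) => // x /cov[p Gp px].
by exists p => //; rewrite in_fset_set // mem_set.
Qed.

Definition rate_latency {R : numDomainType} (c L t : R) :=
  Num.max 0 (c * t - L).

Definition has_service_curve {R : numDomainType} (beta A As : R -> R) :=
  forall v : R, 0 <= v ->
    exists2 u : R, 0 <= u <= v & A u + beta (v - u) <= As v.

Section NetworkCalculus.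
Variables (R : realFieldType) (c rho sigma L : R) (A As : R -> R).
Hypotheses (c_gt0 : 0 < c) (rho_ge0 : 0 <= rho) (rho_le_c : rho <= c).
Hypotheses (sigma_ge0 : 0 <= sigma) (L_ge0 : 0 <= L).
Hypothesis token_bucket :
  forall {s t : R}, 0 <= s -> s <= t -> A t - A s <= rho * (t - s) + sigma.
Hypothesis service : has_service_curve (rate_latency c L) A As.

Lemma rate_latency_ge0 (t : R) : 0 <= rate_latency c L t.
Proof. by rewrite le_max lexx. Qed.

Lemma rate_latency_ge (t : R) : c * t - L <= rate_latency c L t.
Proof. by rewrite le_max lexx orbT. Qed.

Lemma token_bucket_rate_latency_gap {u t : R} : u <= t ->
  rho * (t - u) - rate_latency c L (t - u) <= rho / c * L.
Proof.
(* Since rho <= c, the gap is largest at t - u = L / c. *)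
rewrite -subr_ge0; set x := t - u => x0; set k := rho / c.
have rho_k : rho = k * c by rewrite mulfVK ?gt_eqF.
have k1 : k <= 1 by rewrite ler_pdivrMr // mul1r.
have k0 : 0 <= k by rewrite divr_ge0 // ltW.
have := rate_latency_ge x; have := rate_latency_ge0 x; rewrite rho_k; nra.
Qed.

Lemma backlog_bound (t : R) : 0 <= t -> A t - As t <= sigma + rho / c * L.
Proof.
move=> t0; have [u /andP[u0 ut] svc] := service t0.
have := token_bucket u0 ut; have := token_bucket_rate_latency_gap ut.
lra.
Qed.

Hypothesis service_le_arrival : forall t, As t <= A t.

Lemma output_arrival_curve (s t : R) : 0 <= s -> 0 <= t ->
  As (s + t) - As s <= rho * t + sigma + rho / c * L.
Proof.
move=> s0 t0; have [u /andP[u0 us] svc] := service s0.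
have ust : u <= s + t by rewrite (le_trans us) // lerDl.
have := token_bucket u0 ust; have := token_bucket_rate_latency_gap us.
have := service_le_arrival (s + t).
lra.
Qed.

Hypothesis arrival_nondecreasing : {homo A : x y / x <= y}.

Lemma arrival_served_within (t e : R) : 0 <= t -> 0 < e ->
  A t <= As (t + ((sigma + L) / c + e)).
Proof.
move=> t0 e0; set d := (sigma + L) / c.
have cd : c * d = sigma + L by rewrite mulrC mulfVK ?gt_eqF.
have d0 : 0 <= d by rewrite divr_ge0 ?addr_ge0 // ltW.
have /service[u /andP[u0 uv] svc] : 0 <= t + (d + e) by lra.
have [tu|ut] := leP t u.
  apply: le_trans (arrival_nondecreasing tu) _.
  by apply: le_trans svc; rewrite lerDl rate_latency_ge0.
have := token_bucket u0 (ltW ut); have := rate_latency_ge (t + (d + e) - u).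
have : rho * (t - u) <= c * (t - u) by rewrite ler_wpM2r // subr_ge0 ltW.
have : 0 < c * e by rewrite mulr_gt0.
nra.
Qed.

End NetworkCalculus.

Lemma virtual_delay_le (R : realType) (A As : R -> R) (t d : R) : 0 <= d ->
  (forall e, 0 < e -> A t <= As (t + (d + e))) ->
  (virtual_delay A As t <= d%:E)%E.
Proof.
move=> d0 served; apply/lee_addgt0Pr => e e0; rewrite -EFinD.
apply: ereal_inf_lbound; exists (d + e) => //; split; last exact: served.
by rewrite addr_ge0 // ltW.
Qed.

Section StrictPriorityLink.
Variables (R : realType) (T : choiceType) (c lM lMl : R).
Variables (a l : T -> R) (cls : T -> nat) (S : T -> \bar R).
Hypotheses (c_gt0 : 0 < c) (l_gt0 : forall p, 0 < l p).
Hypotheses (arrival_ge0 : forall p, 0 <= a p).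
Hypothesis arrivals_finite : forall t, finite_set [set p | a p < t].
Hypotheses (lM_ge0 : 0 <= lM) (lMl_ge0 : 0 <= lMl).
Hypothesis top_len : forall p, cls p = 0%N -> l p <= lM.
Hypothesis low_len : forall p, (0 < cls p)%N -> l p <= lMl.
Hypothesis sched : np_strict_priority c a l cls S.

Local Notation dep := (departure c l S).
Local Notation sending := (transmitting c l S).
Local Notation A := (cum_arrival a l cls).
Local Notation As := (cum_service c l cls S).

Let duration_gt0 p : 0 < l p / c. Proof. by rewrite divr_gt0. Qed.

Lemma finite_arrived_before (X : set T) t :
  (forall p, X p -> a p < t) -> finite_set X.
Proof. by move=> Xt; apply: sub_finite_set (arrivals_finite t). Qed.

Lemma arrival_le_start p : ((a p)%:E <= S p)%E.
Proof. by case: sched. Qed.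

Lemma arrival_lt_departure p : ((a p)%:E < dep p)%E.
Proof.
apply: (@lt_le_trans _ _ (a p + l p / c)%:E); first by rewrite lte_fin ltrDl.
by rewrite EFinD leeD2r // arrival_le_start.
Qed.

Lemma departed_arrived p t : (dep p < t%:E)%E -> a p < t.
Proof. by rewrite -lte_fin; apply: lt_trans (arrival_lt_departure p). Qed.

Lemma transmittingP p x :
  sending p x <-> exists2 s, S p = s%:E & s <= x < s + l p / c.
Proof.
rewrite /transmitting /departure; case: (S p) => [s| |] /=.
- rewrite lee_fin -EFinD lte_fin.
  by split=> [[sx xs]|[_ [<-] /andP[]//]]; exists s; rewrite ?sx.
- by split=> [[]|[]//]; rewrite leNgt ltey.
- by split=> [[_]|[]//]; rewrite ltNge leNye.
Qed.

Lemma transmitting_arrived p x : sending p x -> a p <= x.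
Proof. by case=> Spx _; rewrite -lee_fin (le_trans (arrival_le_start p)). Qed.

Lemma transmitting_subset1 t : is_subset1 [set p | sending p t].
Proof.
case: sched => _ excl _ _ _ p q /= tp tq.
by apply: contrapT => pq; exact: excl pq tp tq.
Qed.

Lemma straddling_subset1 t :
  is_subset1 [set p | (S p < t%:E)%E /\ (t%:E <= dep p)%E].
Proof.
have straddleP p : (S p < t%:E)%E /\ (t%:E <= dep p)%E ->
    exists2 s, S p = s%:E & s < t <= s + l p / c.
  rewrite /departure; case: (S p) => [s| |] [].
  - by rewrite lte_fin -EFinD lee_fin => st ts; exists s; rewrite ?st.
  - by rewrite ltNge leey.
  - by rewrite leNgt ltNye.
move=> p q /straddleP[sp Sp /andP[spt tp]] /straddleP[sq Sq /andP[sqt tq]].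
have ws : Num.max sp sq < t by rewrite gt_max spt.
by apply: (@transmitting_subset1 (Num.max sp sq)); apply/transmittingP;
  [exists sp | exists sq]; rewrite // le_max lexx ?orbT (lt_le_trans ws).
Qed.

Lemma sum_low_transmitting_le t :
  \sum_(p \in [set p | (0 < cls p)%N /\ sending p t]) l p <= lMl.
Proof.
apply: fsum_subset1_le => // [p q [_ tp] [_ tq]|p [/low_len//]].
exact: transmitting_subset1 tp tq.
Qed.

Lemma sum_top_straddling_le t :
  \sum_(p \in [set p | cls p = 0%N /\ (S p < t%:E)%E /\ (t%:E <= dep p)%E]) l p
    <= lM.
Proof.
apply: fsum_subset1_le => // [p q [_ tp] [_ tq]|p [/top_len//]].
exact: straddling_subset1 tp tq.
Qed.

Lemma cum_arrival_nondecreasing : {homo A : s t / s <= t}.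
Proof.
move=> s t st; apply: ler_fsum_subset => [p [p0 ps]||p _]; last exact: ltW.
- by split=> //; apply: lt_le_trans st.
- by apply: (@finite_arrived_before _ t) => p [].
Qed.

Lemma cum_service_le_arrival t : As t <= A t.
Proof.
apply: ler_fsum_subset => [p [p0 /departed_arrived]||p _] //; last exact: ltW.
by apply: (@finite_arrived_before _ t) => p [].
Qed.

Lemma cum_arrival_le_service t :
  (forall p, cls p = 0%N -> a p < t -> (dep p < t%:E)%E) -> A t <= As t.
Proof.
move=> gone; apply: ler_fsum_subset => [p [p0 pt]||p _]; last exact: ltW.
  by split=> //; apply: gone.
by apply: (@finite_arrived_before _ t) => p [_ /departed_arrived].
Qed.

Definition backlogged (x y : R) := forall t, x < t < y ->
  exists p, [/\ cls p = 0%N, a p < t & (t%:E < dep p)%E].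

Lemma busy_period_start v q :
  cls q = 0%N -> a q < v -> (v%:E <= dep q)%E ->
  exists2 m, [/\ cls m = 0%N, a m < v & backlogged (a m) v] &
    forall p, cls p = 0%N -> a p < a m -> (dep p <= (a m)%:E)%E.
Proof.
move=> q0 qv vq.
pose B := [set p | [/\ cls p = 0%N, a p < v & backlogged (a p) v]].
have Bq : B q.
  split=> // t /andP[qt tv]; exists q; split=> //.
  by apply: lt_le_trans vq; rewrite lte_fin.
have Bfin : finite_set B by apply: (@finite_arrived_before _ v) => p [].
have [m Bm mmin] := finite_set_argmin a Bfin Bq.
exists m => // p p0 pm; rewrite leNgt; apply/negP => mp.
suff /mmin : B p by rewrite leNgt pm.
case: Bm => _ mv mb; split=> //; first exact: lt_trans pm mv.
move=> t /andP[pt tv]; have [tm|mt] := leP t (a m).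
  by exists p; split=> //; apply: le_lt_trans mp; rewrite lee_fin.
by apply: mb; rewrite mt tv.
Qed.

Section BusyPeriod.
Variables (m : T) (v : R).
Hypotheses (m_top : cls m = 0%N) (m_before : a m < v).
Hypothesis m_backlogged : backlogged (a m) v.
Hypothesis m_first :
  forall p, cls p = 0%N -> a p < a m -> (dep p <= (a m)%:E)%E.
Local Notation u := (a m).

Lemma busy_period_link_busy x : u <= x < v -> exists p, sending p x.
Proof.
case: sched => _ _ work_conserving _ _ /andP[ux xv].
have [p [p0 px xp]] : exists p, [/\ cls p = 0%N, a p <= x & (x%:E < dep p)%E].
  have [xu|ux'] := leP x u.
    exists m; split=> //; apply: le_lt_trans (arrival_lt_departure m).
    by rewrite lee_fin.
  have /m_backlogged[p [p0 px xp]] : u < x < v by rewrite ux' xv.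
  by exists p; split=> //; apply: ltW.
have [Spx|xSp] := leP (S p) x%:E; first by exists p.
exact: work_conserving px xSp.
Qed.

Lemma busy_period_no_low_start p s :
  (0 < cls p)%N -> S p = s%:E -> u < s < v -> False.
Proof.
case: sched => _ _ _ priority _ pc Sp /m_backlogged[r [r0 rs sr]].
have Srs : (S r <= s%:E)%E.
  by rewrite leNgt; apply/negP; apply: priority Sp _ rs; rewrite r0.
suff rp : r = p by move: pc; rewrite -rp r0.
apply: (@transmitting_subset1 s); first by split.
by apply/transmittingP; exists s; rewrite // lexx /= ltrDl duration_gt0.
Qed.

Let low := [set p | (0 < cls p)%N /\ sending p u].
Let top := [set p | cls p = 0%N /\ (S p < v%:E)%E /\ (v%:E <= dep p)%E].
Let departed := [set p | [/\ cls p = 0%N, u <= a p & (dep p < v%:E)%E]].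

Lemma busy_period_sender p x :
  u <= x < v -> sending p x -> (low `|` top `|` departed) p.
Proof.
move=> /andP[ux xv] px; have [p0|pc] := posnP (cls p); last first.
  left; left; split=> //; case/transmittingP: px => s Sp /andP[sx xs].
  apply/transmittingP; exists s => //; rewrite (le_lt_trans ux xs) andbT.
  rewrite leNgt; apply/negP => us.
  by apply: (busy_period_no_low_start pc Sp); rewrite us (le_lt_trans sx xv).
have up : u <= a p.
  rewrite leNgt; apply/negP => pu; case: px => _; apply/negP; rewrite -leNgt.
  by rewrite (le_trans (m_first p0 pu)) // lee_fin.
have [vp|pv] := leP v%:E (dep p); last by right.
left; right; split=> //; split=> //; case: px => Spx _.
by apply: le_lt_trans Spx _; rewrite lte_fin.
Qed.

Lemma busy_period_length :
  c * (v - u) <= lMl + lM + \sum_(p \in departed) l p.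
Proof.
have low_fin : finite_set low.
  apply: (@finite_arrived_before _ v) => p [_ /transmitting_arrived pu].
  exact: le_lt_trans pu m_before.
have top_fin : finite_set top.
  apply: (@finite_arrived_before _ v) => p [_ [Spv _]].
  by rewrite -lte_fin (le_lt_trans (arrival_le_start p)).
have departed_fin : finite_set departed.
  by apply: (@finite_arrived_before _ v) => p [_ _ /departed_arrived].
have cover : v - u <= \sum_(p \in low `|` top `|` departed) (l p / c).
  apply: (@interval_cover_length _ _ (fun p => fine (S p)) (fun p => l p / c))
    => [p||x ux]; [exact: ltW | by rewrite !finite_setU |].
  have [p px] := busy_period_link_busy ux; exists p.
    exact: busy_period_sender ux px.
  by case/transmittingP: px => s -> /=.
have l_ge0 p : 0 <= l p := ltW (l_gt0 p).
have sum_split : \sum_(p \in low `|` top `|` departed) l p <=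
    \sum_(p \in low) l p + \sum_(p \in top) l p + \sum_(p \in departed) l p.
  apply: le_trans (fsum_setU_le _ _ _) _ => //; first by rewrite finite_setU.
  by rewrite lerD2r fsum_setU_le.
have := sum_low_transmitting_le u; have := sum_top_straddling_le v.
rewrite -mulr_fsuml ler_pdivlMr // mulrC in cover; lra.
Qed.

Lemma busy_period_departed : A u + \sum_(p \in departed) l p <= As v.
Proof.
rewrite /cum_arrival -fsbigU0.
- apply: ler_fsum_subset => [p [[p0 pu]|[p0 _ pv]] //||p _]; last exact: ltW.
  + by split=> //; apply: le_lt_trans (m_first p0 pu) _; rewrite lte_fin.
  + by apply: (@finite_arrived_before _ v) => p [_ /departed_arrived].
- by apply: (@finite_arrived_before _ u) => p [].
- by apply: (@finite_arrived_before _ v) => p [_ _ /departed_arrived].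
- by move=> p [[_ pu] [_ up _]]; move: (lt_le_trans pu up); rewrite ltxx.
Qed.

Lemma busy_period_service : A u + rate_latency c (lM + lMl) (v - u) <= As v.
Proof.
have := busy_period_length; have := busy_period_departed.
have : 0 <= \sum_(p \in departed) l p by apply: fsumr_ge0 => p _; apply: ltW.
move=> *; rewrite -lerBrDl /rate_latency ge_max; apply/andP; split; lra.
Qed.

End BusyPeriod.

Lemma strict_priority_service_curve :
  has_service_curve (rate_latency c (lM + lMl)) A As.
Proof.
move=> v v0.
have [gone|] := pselect (forall p, cls p = 0%N -> a p < v -> (dep p < v%:E)%E).
  exists v; first by rewrite v0 lexx.
  rewrite subrr /rate_latency mulr0 sub0r (max_idPl _) ?addr0.
    exact: cum_arrival_le_service.
  by rewrite oppr_le0 addr_ge0.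
move=> /existsNP[q /not_implyP[q0 /not_implyP[qv /negP]]]; rewrite -leNgt => vq.
have [m [m0 mv mb] m_first] := busy_period_start q0 qv vq.
exists (a m); first by rewrite arrival_ge0 ltW.
exact: busy_period_service.
Qed.

End StrictPriorityLink.

Theorem corollary3 (R : realType) (T : choiceType)
    (c rho sigma lM lMl : R) (a l : T -> R) (cls : T -> nat) (S : T -> \bar R) :
  0 < c -> 0 <= rho -> rho <= c -> 0 <= sigma ->
  0 <= lM -> 0 <= lMl ->
  (* packets: positive lengths, arrivals at times >= 0 (initially empty),
     finitely many arrivals in any bounded interval *)
  (forall p, 0 < l p) ->
  (forall p, 0 <= a p) ->
  (forall t, finite_set [set p | a p < t]) ->
  (* maximum packet lengths *)
  (forall p, cls p = 0%N -> l p <= lM) ->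
  (forall p, (0 < cls p)%N -> l p <= lMl) ->
  (* scheduling discipline *)
  np_strict_priority c a l cls S ->
  (* token-bucket arrival curve of the highest-priority flow *)
  (forall s t, 0 <= s -> s <= t ->
     cum_arrival a l cls t - cum_arrival a l cls s <= rho * (t - s) + sigma) ->
  [/\ (forall s t, 0 <= s -> 0 <= t ->
         cum_service c l cls S (s + t) - cum_service c l cls S s
           <= rho * t + sigma + rho / c * (lM + lMl)),
      (forall t, 0 <= t ->
         cum_arrival a l cls t - cum_service c l cls S t
           <= sigma + rho / c * (lM + lMl)) &
      (forall t, 0 <= t ->
         (virtual_delay (cum_arrival a l cls) (cum_service c l cls S) t
           <= ((sigma + lM + lMl) / c)%:E)%E)].
Proof.
move=> c_gt0 rho_ge0 rho_le_c sigma_ge0 lM_ge0 lMl_ge0 l_gt0 a_ge0 arrivals_fin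
  top_len low_len sched token_bucket.
have L_ge0 : 0 <= lM + lMl := addr_ge0 lM_ge0 lMl_ge0.
have service := strict_priority_service_curve c_gt0 l_gt0 a_ge0 arrivals_fin
  lM_ge0 lMl_ge0 top_len low_len sched.
split.
- exact: output_arrival_curve c_gt0 rho_ge0 rho_le_c token_bucket service
    (cum_service_le_arrival c_gt0 l_gt0 arrivals_fin sched).
- exact: backlog_bound c_gt0 rho_ge0 rho_le_c token_bucket service.
- move=> t t0; rewrite -addrA.
  apply: virtual_delay_le => [|e e0].
    exact: divr_ge0 (addr_ge0 sigma_ge0 L_ge0) (ltW c_gt0).
  exact: arrival_served_within c_gt0 rho_le_c sigma_ge0 L_ge0 token_bucket
    service (cum_arrival_nondecreasing cls l_gt0 arrivals_fin) t e t0 e0.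
Qed.
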